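(* Let $(i^*_k,j^*_k)$ and $\mu_k$, $k=1,\dots,n$, be a sequence of $k$-th order bottleneck edges and robustness margins, and let $\Pi^*$ be a sequential bottleneck optimising assignment for this sequence. Assume $\mu_k>0$ for all $k\in\{1,\dots,n\}$. Then $\Pi^*\in\mathcal P_{\mathcal A,\mathcal T}(\mathcal A\times\mathcal T)$, $w_{i^*_1,j^*_1}\ge w_{i^*_2,j^*_2}\ge\dots\ge w_{i^*_n,j^*_n}$, and $\Pi^*$ is the unique lexicographic optimiser in the following sense: for every $\Pi'\in\mathcal P_{\mathcal A,\mathcal T}(\mathcal A\times\mathcal T)$ with $\Pi'\ne\Pi^*$, letting $(w'_1,\dots,w'_n)$ be the weights $w_{i,j}$ of the $n$ pairs $(i,j)$ with $\pi'_{i,j}=1$ listed in non-increasing order, either $w_{i^*_1,j^*_1}<w'_1$, or there is $l\in\{2,\dots,n\}$ with $w_{i^*_k,j^*_k}=w'_k$ for all $k<l$ and $w_{i^*_l,j^*_l}<w'_l$. In particular, the sequence $(w_{i^*_1,j^*_1},\dots,w_{i^*_n,j^*_n})$ and the assignment $\Pi^*$ do not depend on the choices of the $k$-th order bottleneck edges.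
   Context: Let $\mathcal A$ be a finite set of agents with $|\mathcal A|=m>1$ and $\mathcal T$ a finite set of tasks with $m\ge|\mathcal T|=n\ge 1$. Let $\mathcal W=\{w_{i,j}\ge 0:(i,j)\in\mathcal A\times\mathcal T\}$ be given assignment weights. An assignment is a family $\Pi=\{\pi_{i,j}\in\{0,1\}:(i,j)\in\mathcal A\times\mathcal T\}$. For $\bar{\mathcal A}\subseteq\mathcal A$, $\bar{\mathcal T}\subseteq\mathcal T$ and $\hat{\mathcal E}\subseteq\bar{\mathcal A}\times\bar{\mathcal T}$, $\mathcal P_{\bar{\mathcal A},\bar{\mathcal T}}(\hat{\mathcal E})$ is the set of assignments $\Pi$ with $\sum_{i:(i,j)\in\hat{\mathcal E}}\pi_{i,j}=1$ for every $j\in\bar{\mathcal T}$ and $\sum_{j:(i,j)\in\hat{\mathcal E}}\pi_{i,j}\le 1$ for every $i\in\bar{\mathcal A}$. Define $b(\Pi,\hat{\mathcal E},\mathcal W)=\max_{(i,j)\in\hat{\mathcal E}}\pi_{i,j}w_{i,j}$; $B_{\bar{\mathcal A},\bar{\mathcal T}}(\hat{\mathcal E},\mathcal W)=\min_{\Pi\in\mathcal P_{\bar{\mathcal A},\bar{\mathcal T}}(\hat{\mathcal E})}b(\Pi,\hat{\mathcal E},\mathcal W)$ (with $\min\emptyset=+\infty$); $\mathcal B_{\bar{\mathcal A},\bar{\mathcal T}}(\hat{\mathcal E},\mathcal W)$ the corresponding set of minimisers (bottleneck minimising assignments); and $E_{\bar{\mathcal A},\bar{\mathcal T}}(\hat{\mathcal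 E},\mathcal W)=\{(i,j)\in\hat{\mathcal E}: w_{i,j}=B_{\bar{\mathcal A},\bar{\mathcal T}}(\hat{\mathcal E},\mathcal W)\}$. For $\bar{\mathcal E}=\bar{\mathcal A}\times\bar{\mathcal T}$ with $|\bar{\mathcal E}|>1$: $e_{\bar{\mathcal A},\bar{\mathcal T}}(\mathcal W)=\arg\max_{(i,j)\in E_{\bar{\mathcal A},\bar{\mathcal T}}(\bar{\mathcal E},\mathcal W)}B_{\bar{\mathcal A},\bar{\mathcal T}}(\bar{\mathcal E}\setminus\{(i,j)\},\mathcal W)$ (maximum-margin bottleneck edges) and $r_{\bar{\mathcal A},\bar{\mathcal T}}(\mathcal W)=\max_{(i,j)\in E_{\bar{\mathcal A},\bar{\mathcal T}}(\bar{\mathcal E},\mathcal W)}\big(B_{\bar{\mathcal A},\bar{\mathcal T}}(\bar{\mathcal E}\setminus\{(i,j)\},\mathcal W)-w_{i,j}\big)$ (robustness margin); if $|\bar{\mathcal E}|=1$, $e_{\bar{\mathcal A},\bar{\mathcal T}}(\mathcal W)=\bar{\mathcal E}$ and $r_{\bar{\mathcal A},\bar{\mathcal T}}(\mathcal W)=\infty$. Sequential bottleneck assignment: set $\bar{\mathcal A}_1=\mathcal A$, $\bar{\mathcal T}_1=\mathcal T$, and for $k=1,\dots,n$ let $\bar{\mathcal E}_k=\bar{\mathcal A}_k\times\bar{\mathcal T}_k$, choose a $k$-th order bottleneck edge $(i^*_k,j^*_k)\in e_{\bar{\mathcal A}_k,\bar{\mathcal T}_k}(\mathcal W)$ (any choice),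 let $\mu_k=r_{\bar{\mathcal A}_k,\bar{\mathcal T}_k}(\mathcal W)$ be the $k$-th order robustness margin, and set $\bar{\mathcal A}_{k+1}=\bar{\mathcal A}_k\setminus\{i^*_k\}$, $\bar{\mathcal T}_{k+1}=\bar{\mathcal T}_k\setminus\{j^*_k\}$. Given these choices, an assignment $\Pi^*$ is sequential bottleneck optimising if $\Pi^*\in\mathcal B_{\bar{\mathcal A}_k,\bar{\mathcal T}_k}(\bar{\mathcal E}_k,\mathcal W)$ for every $k\in\{1,\dots,n\}$. *)

From HB Require Import structures.
From mathcomp Require Import all_boot all_order all_algebra.
Set Implicit Arguments. Unset Strict Implicit. Unset Printing Implicit Defensive.
Import Order.TTheory GRing.Theory Num.Theory.

Section Bottleneck.
Variables (R : realFieldType) (A T : finType) (w : A * T -> R).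
Local Open Scope ring_scope.

(* Extended values: [None] stands for +infinity, [Some a] for the real a. *)
Definition ole (x y : option R) : bool :=
  match x, y with
  | _, None => true
  | None, Some _ => false
  | Some a, Some b => a <= b
  end.
Definition olt (x y : option R) : bool :=
  match x, y with
  | Some a, Some b => a < b
  | Some _, None => true
  | None, _ => false
  end.
Definition omin (x y : option R) : option R :=
  match x, y with
  | None, z => z
  | z, None => z
  | Some a, Some b => Some (Num.min a b)
  end.
Definition omax (x y : option R) : option R :=
  match x, y with
  | None, _ => None
  | _, None => None
  | Some a, Some b => Some (Num.max a b)
  end.
Definition osub (x : option R) (c : R) : option R :=
  match x with None => None | Some a => Some (a - c) end.

Definition assignment := {ffun A * T -> bool}.

Definition inP (Ab : {set A}) (Tb : {set T}) (E : {set A * T}) (P : assignment)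
  : bool :=
  [forall j in Tb, (\sum_(i | (i, j) \in E) (P (i, j) : nat))%N == 1%N] &&
  [forall i in Ab, (\sum_(j | (i, j) \in E) (P (i, j) : nat) <= 1)%N].

(* b(Pi, E, W) = max_{(i,j) in E} pi_{i,j} w_{i,j}  (weights are >= 0) *)
Definition bval (E : {set A * T}) (P : assignment) : R :=
  \big[Num.max/0]_(x in E) (if P x then w x else 0).

Definition Bval (Ab : {set A}) (Tb : {set T}) (E : {set A * T}) : option R :=
  \big[omin/None]_(P | inP Ab Tb E P) Some (bval E P).

Definition Bset (Ab : {set A}) (Tb : {set T}) (E : {set A * T})
  : {set assignment} :=
  [set P | inP Ab Tb E P && (Some (bval E P) == Bval Ab Tb E)].

Definition Eset (Ab : {set A}) (Tb : {set T}) (E : {set A * T}) : {set A * T} :=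
  [set x in E | Some (w x) == Bval Ab Tb E].

Definition eset (Ab : {set A}) (Tb : {set T}) : {set A * T} :=
  let Eb := setX Ab Tb in
  if #|Eb| == 1%N then Eb
  else [set x in Eset Ab Tb Eb |
          [forall y in Eset Ab Tb Eb,
             ole (Bval Ab Tb (Eb :\ y)) (Bval Ab Tb (Eb :\ x))]].

(* r_{Ab,Tb}(W): robustness margin (None = +oo).  The neutral element [Some 0]
   of the max is harmless: every term is >= 0. *)
Definition rmargin (Ab : {set A}) (Tb : {set T}) : option R :=
  let Eb := setX Ab Tb in
  if #|Eb| == 1%N then None
  else \big[omax/Some 0]_(x in Eset Ab Tb Eb) osub (Bval Ab Tb (Eb :\ x)) (w x).

(* The sequential construction, 0-indexed: step k uses Abar k, Tbar k,
   and chooses edge ed k. *)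
Fixpoint Abar (ed : nat -> A * T) (k : nat) : {set A} :=
  match k with 0 => setT | k'.+1 => Abar ed k' :\ (ed k').1 end.
Fixpoint Tbar (ed : nat -> A * T) (k : nat) : {set T} :=
  match k with 0 => setT | k'.+1 => Tbar ed k' :\ (ed k').2 end.

Definition valid_choices (ed : nat -> A * T) : Prop :=
  forall k, (k < #|T|)%N -> ed k \in eset (Abar ed k) (Tbar ed k).

Definition margins_pos (ed : nat -> A * T) : Prop :=
  forall k, (k < #|T|)%N -> olt (Some 0) (rmargin (Abar ed k) (Tbar ed k)).

Definition seq_bottleneck_opt (ed : nat -> A * T) (P : assignment) : Prop :=
  forall k, (k < #|T|)%N ->
    P \in Bset (Abar ed k) (Tbar ed k) (setX (Abar ed k) (Tbar ed k)).

Definition sorted_weights (P : assignment) : seq R :=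
  sort (fun a b => b <= a) [seq w x | x <- enum [set x | P x]].

End Bottleneck.

From HB Require Import structures.
From mathcomp Require Import all_boot all_order all_algebra.
Import Order.TTheory GRing.Theory Num.Theory.
Set Implicit Arguments. Unset Strict Implicit. Unset Printing Implicit Defensive.

(* The key step is that a positive robustness margin forces every assignment
   that is bottleneck optimal at stage k to use the k-th bottleneck edge e_k:
   an optimal assignment avoiding e_k would witness B(E_k \ e_k) <= w(e_k) =
   B(E_k), whereas e_k has maximal margin B(E_k \ e_k) - w(e_k) > 0.  Hence
   Pi* consists of the edges e_1, ..., e_n.  Now compare any complete
   assignment Pi' with Pi* stage by stage: as long as Pi' uses e_1, ..., e_k,
   it restricts to an assignment of stage k+1 whose bottleneck is the
   (k+1)-th largest weight of Pi'; this weight is at least w(e_(k+1)), with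
   equality only if Pi' is again optimal at stage k+1 and thus uses e_(k+1).
   So either Pi' = Pi* or the weight sequence of Pi' is lexicographically
   larger, and uniqueness of the lexicographic minimiser gives independence
   of the choices. *)

Section ExtendedReals.
Variable R : realFieldType.
Local Open Scope ring_scope.
Implicit Types x y z : option R.

Lemma ole_trans x y z : ole x y -> ole y z -> ole x z.
Proof. by case: x; case: y; case: z => //= a b c; apply: le_trans. Qed.

Lemma olt_ole_trans x y z : olt x y -> ole y z -> olt x z.
Proof. by case: x; case: y; case: z => //= a b c; apply: lt_le_trans. Qed.

Lemma olt_oleF x y : olt x y -> ole y x = false.
Proof. by case: x; case: y => //= a b; apply: lt_geF. Qed.

Lemma ole_ominl x y : ole (omin x y) x.
Proof. by case: x; case: y => //= a b; rewrite ?lexx // ge_min lexx. Qed.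

Lemma ole_ominr x y : ole (omin x y) y.
Proof. by case: x; case: y => //= a b; rewrite ?lexx // ge_min lexx orbT. Qed.

Lemma ole_big_omin (I : eqType) (r : seq I) (p : pred I) (F : I -> option R) a :
  a \in r -> p a -> ole (\big[@omin R/None]_(i <- r | p i) F i) (F a).
Proof.
elim: r => // b r IH; rewrite in_cons big_cons => /orP [/eqP <-|ar] pa.
  by rewrite pa; apply: ole_ominl.
case: (p b); last exact: IH.
exact: ole_trans (ole_ominr _ _) (IH ar pa).
Qed.

Lemma big_omax_gt0 (I : finType) (S : pred I) (F : I -> option R) :
  olt (Some 0) (\big[@omax R/Some 0]_(i in S) F i) ->
  exists2 i, i \in S & olt (Some 0) (F i).
Proof.
case: (pickP (fun i => (i \in S) && olt (Some 0) (F i))) => [i /andP[]|none].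
  by exists i.
move/olt_oleF; suff -> : ole (\big[@omax R/Some 0]_(i in S) F i) (Some 0) by [].
apply: (big_ind (fun v => ole v (Some 0))); first by rewrite /= lexx.
  by move=> [a|] [b|] //= ha hb; rewrite ge_max ha hb.
move=> i iS; have := none i; rewrite iS /=.
by case: (F i) => //= a; rewrite leNgt => ->.
Qed.

End ExtendedReals.

Section OrderFacts.
Variable R : realDomainType.
Local Open Scope ring_scope.

Lemma le_big_max (I : eqType) (r : seq I) (p : pred I) (F : I -> R) a :
  a \in r -> p a -> F a <= \big[Num.max/0]_(i <- r | p i) F i.
Proof.
elim: r => // b r IH; rewrite in_cons big_cons => /orP [/eqP <-|ar] pa.
  by rewrite pa le_max lexx.
case: (p b); last exact: IH.
by rewrite le_max (IH ar pa) orbT.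
Qed.

Lemma big_max_le (I : eqType) (r : seq I) (p : pred I) (F : I -> R) c :
  0 <= c -> (forall i, p i -> F i <= c) ->
  \big[Num.max/0]_(i <- r | p i) F i <= c.
Proof.
move=> c0 hF; apply: (big_ind (fun v => v <= c)) => // u v hu hv.
by rewrite ge_max hu hv.
Qed.

Lemma big_max_ge0 (I : eqType) (r : seq I) (p : pred I) (F : I -> R) :
  0 <= \big[Num.max/0]_(i <- r | p i) F i.
Proof.
elim: r => [|b r IH]; first by rewrite big_nil.
by rewrite big_cons; case: (p b); rewrite // le_max IH orbT.
Qed.

Lemma sorted_ge_head (h a : R) (t : seq R) :
  sorted (fun a b => b <= a) (h :: t) -> a \in h :: t -> a <= h.
Proof.
move=> /= /(order_path_min (fun _ _ _ xy yz => le_trans yz xy)) /allP ht.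
by rewrite in_cons => /orP [/eqP -> //|/ht].
Qed.

Definition lex_lt (n : nat) (u v : nat -> R) :=
  exists l, [/\ (l < n)%N, forall k, (k < l)%N -> u k = v k & u l < v l].

Lemma lex_lt_asym n u v : lex_lt n u v -> ~ lex_lt n v u.
Proof.
case=> l [_ eq_uv lt_uv] [l' [_ eq_vu lt_vu]].
case: (ltngtP l l') => [ll'|l'l|ll'].
- by move: lt_uv; rewrite eq_vu // ltxx.
- by move: lt_vu; rewrite eq_uv // ltxx.
- by move: lt_vu; rewrite -ll' => /(lt_trans lt_uv); rewrite ltxx.
Qed.

Lemma eq_lex_lt n u v u' v' :
  (forall k, (k < n)%N -> u k = u' k) -> (forall k, (k < n)%N -> v k = v' k) ->
  lex_lt n u v -> lex_lt n u' v'.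
Proof.
move=> eq_u eq_v [l [ln eq_uv lt_uv]]; exists l; split => //.
  by move=> k kl; have kn := ltn_trans kl ln; rewrite -eq_u // -eq_v // eq_uv.
by rewrite -eq_u // -eq_v.
Qed.

End OrderFacts.

Section BoolSums.
Variable I : finType.
Implicit Types p f : pred I.

Lemma sum_bool_eq1 p f a : p a -> f a -> (forall b, p b -> f b -> b = a) ->
  (\sum_(i | p i) (f i : nat) = 1)%N.
Proof.
move=> pa fa u; rewrite (bigD1 a) //= fa big1 // => i /andP[pi nia].
by case fi: (f i) => //; rewrite (u i pi fi) eqxx in nia.
Qed.

Lemma sum_bool_eq1_exists p f :
  (\sum_(i | p i) (f i : nat) = 1)%N -> exists a, p a && f a.
Proof.
case: (pickP (fun i => p i && f i)) => [a paf|none]; first by exists a.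
by rewrite big1 // => i pi; have := none i; rewrite pi /=; case: (f i).
Qed.

Lemma sum_bool_le1 p f : (forall a b, p a -> f a -> p b -> f b -> a = b) ->
  (\sum_(i | p i) (f i : nat) <= 1)%N.
Proof.
move=> u; case: (pickP (fun i => p i && f i)) => [a /andP[pa fa]|none].
  by rewrite (@sum_bool_eq1 p f a) // => b pb fb; apply: u.
by rewrite big1 // => i pi; have := none i; rewrite pi /=; case: (f i).
Qed.

Lemma sum_bool_le1_inj p f a b : (\sum_(i | p i) (f i : nat) <= 1)%N ->
  p a -> f a -> p b -> f b -> a = b.
Proof.
move=> hs pa fa pb fb; apply/eqP; apply: contraTT hs => nab.
rewrite (bigD1 a) //= (bigD1 b) /=; last by rewrite pb eq_sym nab.
by rewrite fa fb.
Qed.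

Lemma eq_sum_bool_cond p q f : (forall i, p i != q i -> ~~ f i) ->
  (\sum_(i | p i) (f i : nat) = \sum_(i | q i) (f i : nat))%N.
Proof.
move=> h; rewrite big_mkcond [RHS]big_mkcond; apply: eq_bigr => i _.
case: (eqVneq (p i) (q i)) => [-> //|/h /negbTE ->].
by case: (p i); case: (q i).
Qed.

End BoolSums.

Section Assignments.
Variables (R : realFieldType) (A T : finType) (w : A * T -> R).
Hypothesis w_ge0 : forall x, (0 <= w x)%R.
Local Open Scope ring_scope.
Implicit Types (P : assignment A T) (E : {set A * T}).

Definition full_assignment P :=
  inP [set: A] [set: T] (setX [set: A] [set: T]) P.

Lemma full_task_assigned P j : full_assignment P -> exists i, P (i, j).
Proof.
case/andP => /forallP /(_ j); rewrite in_setT /= => /eqP /sum_bool_eq1_exists.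
by case=> i /andP[_ Pij]; exists i.
Qed.

Lemma full_agent_inj P i1 i2 j :
  full_assignment P -> P (i1, j) -> P (i2, j) -> i1 = i2.
Proof.
case/andP => /forallP /(_ j); rewrite in_setT /= => /eqP /eq_leq h _ h1 h2.
by apply: (sum_bool_le1_inj (f := fun i => P (i, j)) h _ h1 _ h2);
  rewrite in_setX !in_setT.
Qed.

Lemma full_task_inj P i j1 j2 :
  full_assignment P -> P (i, j1) -> P (i, j2) -> j1 = j2.
Proof.
case/andP => _ /forallP /(_ i); rewrite in_setT /= => h h1 h2.
by apply: (sum_bool_le1_inj (f := fun j => P (i, j)) h _ h1 _ h2);
  rewrite in_setX !in_setT.
Qed.

Lemma le_bval E P x : x \in E -> P x -> w x <= bval w E P.
Proof.
move=> xE Px; have := le_big_max (fun x => if P x then w x else 0)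
  (mem_index_enum x) xE.
by rewrite Px.
Qed.

Lemma bval_le E P c : 0 <= c -> (forall x, x \in E -> P x -> w x <= c) ->
  bval w E P <= c.
Proof.
by move=> c0 hc; apply: big_max_le => // x xE; case: ifP => // /hc; apply.
Qed.

Lemma bval_subset E1 E2 P : E1 \subset E2 -> bval w E1 P <= bval w E2 P.
Proof.
move=> sE; apply: bval_le; first exact: big_max_ge0.
by move=> x /(subsetP sE); apply: le_bval.
Qed.

Lemma bval_eq_max E P x : x \in E -> P x ->
  (forall y, y \in E -> P y -> w y <= w x) -> bval w E P = w x.
Proof.
by move=> xE Px hx; apply/eqP; rewrite eq_le bval_le ?le_bval.
Qed.

Lemma Bval_le_bval (Ab : {set A}) (Tb : {set T}) E P :
  inP Ab Tb E P -> ole (Bval w Ab Tb E) (Some (bval w E P)).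
Proof.
exact: (ole_big_omin (fun P => Some (bval w E P)) (mem_index_enum P)).
Qed.

Lemma inP_setD1 (Ab : {set A}) (Tb : {set T}) E P e :
  ~~ P e -> inP Ab Tb E P -> inP Ab Tb (E :\ e) P.
Proof.
move=> Pe /andP [/forallP hc /forallP hr].
have avoid_e x : (x \in E :\ e) != (x \in E) -> ~~ P x.
  by rewrite in_setD1; case: (eqVneq x e) => [->|]; rewrite ?eqxx.
apply/andP; split.
- apply/forallP => j; apply/implyP => jT; move: (hc j); rewrite jT /= => /eqP <-.
  by apply/eqP/eq_sum_bool_cond => i /avoid_e.
- apply/forallP => i; apply/implyP => iA; move: (hr i); rewrite iA /=.
  rewrite (@eq_sum_bool_cond _ (fun j => (i, j) \in E :\ e)
                              (fun j => (i, j) \in E)) //.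
  by move=> j /avoid_e.
Qed.

End Assignments.

Section SequentialStages.
Variables (R : realFieldType) (A T : finType) (w : A * T -> R).
Hypothesis w_ge0 : forall x, (0 <= w x)%R.
Variable ed : nat -> A * T.
Local Open Scope ring_scope.
Local Notation n := #|T|.
Local Notation Ab := (Abar ed).
Local Notation Tb := (Tbar ed).
Local Notation E k := (setX (Abar ed k) (Tbar ed k)).
Implicit Types P : assignment A T.

Lemma in_stage x k : (x \in E k) = (x.1 \in Ab k) && (x.2 \in Tb k).
Proof. by case: x => a b; rewrite in_setX. Qed.

Lemma Tbar_subset j k : (j <= k)%N -> Tb k \subset Tb j.
Proof.
elim: k => [|k IH]; first by rewrite leqn0 => /eqP ->.
rewrite leq_eqVlt => /orP [/eqP -> //|]; rewrite ltnS => /IH.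
exact: subset_trans (subD1set _ _).
Qed.

Lemma edge_task_notin_Tbar m k : (m < k)%N -> (ed m).2 \notin Tb k.
Proof.
move=> mk; apply/negP => /(subsetP (Tbar_subset mk)).
by rewrite /= in_setD1 eqxx.
Qed.

Lemma edge_notin_stage m k : (m < k)%N -> ed m \notin E k.
Proof. by move=> mk; rewrite in_stage (negbTE (edge_task_notin_Tbar mk)) andbF. Qed.

Lemma notin_Abar i k : i \notin Ab k -> exists2 m, (m < k)%N & (ed m).1 = i.
Proof.
elim: k => [|k IH] /=; first by rewrite in_setT.
rewrite in_setD1 negb_and negbK => /orP [/eqP ->|/IH [m mk e]]; first by exists k.
by exists m => //; apply: ltnW.
Qed.

Lemma notin_Tbar j k : j \notin Tb k -> exists2 m, (m < k)%N & (ed m).2 = j.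
Proof.
elim: k => [|k IH] /=; first by rewrite in_setT.
rewrite in_setD1 negb_and negbK => /orP [/eqP ->|/IH [m mk e]]; first by exists k.
by exists m => //; apply: ltnW.
Qed.

Hypothesis choices : valid_choices w ed.

Lemma edge_in_stage k : (k < n)%N -> ed k \in E k.
Proof.
move/choices; rewrite /eset; case: ifP => _ //.
by rewrite !inE => /andP[/andP[]].
Qed.

Lemma stage_edge_task_assigned k P : (k < n)%N -> inP (Ab k) (Tb k) (E k) P ->
  exists i, ((i, (ed k).2) \in E k) && P (i, (ed k).2).
Proof.
move=> kn /andP [/forallP /(_ (ed k).2) + _].
have := edge_in_stage kn; rewrite in_stage => /andP[_ ->].
by move/eqP/sum_bool_eq1_exists.
Qed.

Lemma edge_task_inj j k : (j < n)%N -> (k < n)%N -> (ed j).2 = (ed k).2 -> j = k.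
Proof.
move=> jn kn e; case: (ltngtP j k) => // jk.
  move: (edge_in_stage kn); rewrite in_stage -e.
  by rewrite (negbTE (edge_task_notin_Tbar jk)) andbF.
move: (edge_in_stage jn); rewrite in_stage e.
by rewrite (negbTE (edge_task_notin_Tbar jk)) andbF.
Qed.

Lemma card_Tbar k : (k <= n)%N -> #|Tb k| = (n - k)%N.
Proof.
elim: k => [|k IH] kn; first by rewrite /= cardsT subn0.
have := edge_in_stage kn; rewrite in_stage => /andP[_ edkT].
have := cardsD1 (ed k).2 (Tb k); rewrite edkT IH ?subnS; last exact: ltnW.
by move=> ->.
Qed.

Lemma edge_task_onto j : exists2 k, (k < n)%N & (ed k).2 = j.
Proof.
apply: (@notin_Tbar j n).
by rewrite (cards0_eq (etrans (card_Tbar (leqnn n)) (subnn n))) in_set0.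
Qed.

Lemma Bval_stage k : (k < n)%N -> #|E k| != 1%N ->
  Bval w (Ab k) (Tb k) (E k) = Some (w (ed k)).
Proof.
move=> kn /negbTE E1; move: (choices kn); rewrite /eset E1.
by rewrite !inE => /andP[/andP[_ /eqP <-]].
Qed.

Lemma single_stage_edge k P : (k < n)%N -> #|E k| = 1%N ->
  inP (Ab k) (Tb k) (E k) P -> P (ed k) /\ bval w (E k) P = w (ed k).
Proof.
move=> kn /eqP /cards1P [x Ex] hP.
have Ek : E k = [set ed k].
  by have := edge_in_stage kn; rewrite Ex in_set1 => /eqP ->.
have in_Ek y : y \in E k -> y = ed k.
  by move=> yE; have /set1P : y \in [set ed k] by rewrite -Ek.
have [i /andP[/in_Ek -> Pe]] := stage_edge_task_assigned kn hP; split=> //.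
by apply: (bval_eq_max w_ge0 (edge_in_stage kn) Pe) => y /in_Ek ->.
Qed.

Lemma stage_bval_ge k P : (k < n)%N -> inP (Ab k) (Tb k) (E k) P ->
  w (ed k) <= bval w (E k) P.
Proof.
move=> kn hP; have [E1|E1] := eqVneq #|E k| 1%N.
  by rewrite (single_stage_edge kn E1 hP).2.
by have := Bval_le_bval w hP; rewrite Bval_stage.
Qed.

Hypothesis margins : margins_pos w ed.

(* Avoiding e_k, P would bound B(E_k \ e_k) by w(e_k); but e_k maximises
   B(E_k \ x) over the bottleneck edges x, one of which has positive margin. *)
Lemma stage_optimal_uses_edge k P : (k < n)%N -> inP (Ab k) (Tb k) (E k) P ->
  bval w (E k) P <= w (ed k) -> P (ed k).
Proof.
move=> kn hP hle; have [E1|E1] := eqVneq #|E k| 1%N.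
  exact: (single_stage_edge kn E1 hP).1.
have edkE := choices kn; move: (margins kn).
rewrite /eset /rmargin (negbTE E1) in edkE *.
move: edkE; rewrite inE => /andP [edkE /forallP max_edk].
case/big_omax_gt0 => x xE x_margin.
have wx : w x = w (ed k).
  by move: xE edkE; rewrite !inE => /andP[_ /eqP <-] /andP[_ /eqP []].
have B_gt : olt (Some (w (ed k))) (Bval w (Ab k) (Tb k) (E k :\ ed k)).
  apply: olt_ole_trans (implyP (max_edk x) xE).
  by move: x_margin; rewrite -wx; case: (Bval _ _ _ _) => //= c; rewrite subr_gt0.
apply/negPn/negP => /inP_setD1 /(_ hP) hP'.
suff : ole (Bval w (Ab k) (Tb k) (E k :\ ed k)) (Some (w (ed k))).
  by rewrite (olt_oleF B_gt).
apply: ole_trans (Bval_le_bval w hP') _ => /=.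
apply: le_trans hle; apply: bval_subset; exact: subD1set.
Qed.

Lemma full_assigned_outside_stage P k x : full_assignment P ->
  (forall m, (m < k)%N -> P (ed m)) -> P x -> x \notin E k ->
  exists2 m, (m < k)%N & x = ed m.
Proof.
move=> hP uses; case: x => i j Px; rewrite in_stage negb_and => /orP [].
- case/notin_Abar => m mk /= ei; exists m => //; subst i.
  have Pem : P ((ed m).1, (ed m).2) by rewrite -surjective_pairing uses.
  by rewrite (full_task_inj hP Px Pem) -surjective_pairing.
- case/notin_Tbar => m mk /= ej; exists m => //; subst j.
  have Pem : P ((ed m).1, (ed m).2) by rewrite -surjective_pairing uses.
  by rewrite (full_agent_inj hP Px Pem) -surjective_pairing.
Qed.

Lemma full_inP_stage P k : full_assignment P ->
  (forall m, (m < k)%N -> P (ed m)) -> inP (Ab k) (Tb k) (E k) P.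
Proof.
move=> hP uses; apply/andP; split; apply/forallP; last first.
  move=> i; apply/implyP => _; apply: sum_bool_le1 => j1 j2 _ h1 _ h2.
  exact: full_task_inj hP h1 h2.
move=> j; apply/implyP => jT; have [i Pij] := full_task_assigned j hP.
have ijE : (i, j) \in E k.
  apply/negPn/negP => /(full_assigned_outside_stage hP uses Pij) [m mk eij].
  by move: jT; rewrite [j](congr1 snd eij) (negbTE (edge_task_notin_Tbar mk)).
apply/eqP/(@sum_bool_eq1 _ _ (fun i => P (i, j)) i) => // i' _ Pi'j.
exact: full_agent_inj hP Pi'j Pij.
Qed.

Lemma full_edge_task P k i : full_assignment P -> P (ed k) ->
  P (i, (ed k).2) = (i == (ed k).1).
Proof.
move=> hP Pe; have Pe' : P ((ed k).1, (ed k).2) by rewrite -surjective_pairing.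
apply/idP/eqP => [Pi|->//]; exact: full_agent_inj hP Pi Pe'.
Qed.

Lemma full_eq_on_edges P1 P2 : full_assignment P1 -> full_assignment P2 ->
  (forall k, (k < n)%N -> P1 (ed k)) -> (forall k, (k < n)%N -> P2 (ed k)) ->
  P1 = P2.
Proof.
move=> hP1 hP2 uses1 uses2; apply/ffunP => -[i j].
have [k kn <-] := edge_task_onto j.
by rewrite (full_edge_task i hP1 (uses1 k kn)) (full_edge_task i hP2 (uses2 k kn)).
Qed.

Lemma perm_assigned_stage P k : full_assignment P -> (k <= n)%N ->
  (forall m, (m < k)%N -> P (ed m)) ->
  perm_eq (enum [set x | P x]) (map ed (iota 0 k) ++ enum [set x | P x & x \in E k]).
Proof.
move=> hP kn uses; apply: uniq_perm; first exact: enum_uniq.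
  rewrite cat_uniq enum_uniq andbT; apply/andP; split.
    rewrite map_inj_in_uniq ?iota_uniq // => a b.
    rewrite !mem_iota !add0n => ak bk e.
    by apply: edge_task_inj; rewrite ?(leq_trans ak) ?(leq_trans bk) ?e.
  apply/hasPn => x; rewrite mem_enum inE => /andP [_ xE].
  apply/mapP => -[m]; rewrite mem_iota add0n => mk ex.
  by move: xE; rewrite ex (negbTE (edge_notin_stage mk)).
move=> x; rewrite mem_cat !mem_enum !inE -in_stage.
case Px: (P x) => /=.
  case xE: (x \in E k); first by rewrite orbT.
  have [m mk ->] := full_assigned_outside_stage hP uses Px (negbT xE).
  by rewrite map_f // mem_iota add0n.
rewrite orbF; apply/esym/mapP => -[m]; rewrite mem_iota add0n => mk ex.
by move: Px; rewrite ex uses.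
Qed.

Definition follows_choices P k :=
  forall j, (j < k)%N -> P (ed j) /\ nth 0 (sorted_weights w P) j = w (ed j).

(* Once the k largest weights of P are those of the first k chosen edges, the
   remaining weights are those of P inside stage k, whose maximum is the
   bottleneck of P there. *)
Lemma nth_sorted_weights_stage P k : full_assignment P -> (k < n)%N ->
  follows_choices P k -> nth 0 (sorted_weights w P) k = bval w (E k) P.
Proof.
move=> hP kn hk; have uses m (mk : (m < k)%N) := (hk m mk).1.
set s := sorted_weights w P; set Sk := [set x | P x & x \in E k].
have s_perm : perm_eq s (map w (map ed (iota 0 k) ++ enum Sk)).
  by rewrite /s /sorted_weights perm_sort perm_map // perm_assigned_stage // ltnW.
have [x0 x0S] : exists x, x \in Sk.
  have [i /andP[iE Pi]] := stage_edge_task_assigned kn (full_inP_stage hP uses).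
  by exists (i, (ed k).2); rewrite inE Pi.
have size_s : (k < size s)%N.
  rewrite (perm_size s_perm) size_map size_cat size_map size_iota -addn1 leq_add2l.
  by rewrite -cardE card_gt0; apply/set0Pn; exists x0.
have take_s : take k s = map w (map ed (iota 0 k)).
  apply: (@eq_from_nth _ 0); first by rewrite size_take size_s !size_map size_iota.
  move=> j; rewrite size_take size_s => jk; rewrite -map_comp.
  by rewrite nth_take // (hk j jk).2 (nth_map 0) ?size_iota // nth_iota.
have drop_perm : perm_eq (drop k s) (map w (enum Sk)).
  by rewrite -(perm_cat2l (take k s)) cat_take_drop take_s -map_cat.
have drop_sorted : sorted (fun a b => b <= a) (drop k s).
  by apply/drop_sorted/sort_sorted => a b; apply: le_total.
rewrite -[X in nth _ _ X]addn0 -nth_drop.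
move: drop_perm drop_sorted; case: (drop k s) => [|h t] hperm hsorted.
  by move: (perm_mem hperm (w x0)); rewrite in_nil map_f ?mem_enum.
have /mapP [y] : h \in map w (enum Sk) by rewrite -(perm_mem hperm) mem_head.
rewrite mem_enum inE => /andP [Py yE] hy; rewrite /= hy (bval_eq_max w_ge0 yE Py) //.
move=> x xE Px; rewrite -hy; apply: (sorted_ge_head hsorted).
by rewrite (perm_mem hperm) map_f // mem_enum inE Px.
Qed.

Lemma follows_or_lex_lt P k : full_assignment P -> (k <= n)%N ->
  follows_choices P k \/ lex_lt k (fun j => w (ed j)) (nth 0 (sorted_weights w P)).
Proof.
move=> hP; elim: k => [|k IH] kn; first by left.
case: (IH (ltnW kn)) => [hk|[l [lk eq_l lt_l]]]; last first.
  by right; exists l; split=> //; apply: ltnW.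
have uses m (mk : (m < k)%N) := (hk m mk).1.
have hin := full_inP_stage hP uses.
have nth_k := nth_sorted_weights_stage hP kn hk.
move: (stage_bval_ge kn hin); rewrite le_eqVlt => /orP [/eqP eq_k | lt_k].
  left=> j; rewrite ltnS leq_eqVlt => /orP [/eqP -> | /hk //].
  by rewrite nth_k -eq_k; split=> //; apply: stage_optimal_uses_edge; rewrite -?eq_k.
by right; exists k; split=> // [j /hk []|]; rewrite ?nth_k.
Qed.

Variable Pst : assignment A T.
Hypothesis opt : seq_bottleneck_opt w ed Pst.

Lemma opt_inP k : (k < n)%N -> inP (Ab k) (Tb k) (E k) Pst.
Proof. by move/opt; rewrite inE => /andP []. Qed.

Lemma opt_bval k : (k < n)%N -> bval w (E k) Pst = w (ed k).
Proof.
move=> kn; have [E1|E1] := eqVneq #|E k| 1%N.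
  exact: (single_stage_edge kn E1 (opt_inP kn)).2.
by move: (opt kn); rewrite inE Bval_stage // => /andP [_ /eqP []].
Qed.

Lemma opt_uses_edge k : (k < n)%N -> Pst (ed k).
Proof. by move=> kn; rewrite stage_optimal_uses_edge ?opt_inP ?opt_bval. Qed.

Lemma opt_full : (0 < n)%N -> full_assignment Pst.
Proof. exact: opt_inP. Qed.

Lemma edge_weights_nonincreasing k : (k.+1 < n)%N -> w (ed k.+1) <= w (ed k).
Proof.
move=> kn; rewrite -(opt_bval kn) -(opt_bval (ltnW kn)).
by apply: bval_subset; apply: setXS; apply: subD1set.
Qed.

Lemma opt_follows_choices : (0 < n)%N -> follows_choices Pst n.
Proof.
move=> n0; suff : forall k, (k <= n)%N -> follows_choices Pst k by apply.
elim=> [//|k IH] kn j; rewrite ltnS leq_eqVlt => /orP [/eqP -> | /(IH (ltnW kn)) //].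
rewrite nth_sorted_weights_stage ?opt_full ?opt_bval //; last exact: IH (ltnW kn).
by split=> //; apply: opt_uses_edge.
Qed.

Lemma lex_lt_opt P : (0 < n)%N -> full_assignment P -> P != Pst ->
  lex_lt n (fun j => w (ed j)) (nth 0 (sorted_weights w P)).
Proof.
move=> n0 hP; case: (follows_or_lex_lt hP (leqnn n)) => // hn.
case/eqP; apply: full_eq_on_edges => //; last exact: opt_uses_edge.
  exact: opt_full.
by move=> k /hn [].
Qed.

End SequentialStages.

Theorem mainTheorem4 (R : realFieldType) (A T : finType) (w : A * T -> R)
  (hA : (1 < #|A|)%N) (hT : (1 <= #|T|)%N) (hTA : (#|T| <= #|A|)%N)
  (hw : forall x, (0 <= w x)%R)
  (ed : nat -> A * T) (Pst : assignment A T)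
  (hchoice : valid_choices w ed)
  (hmu : margins_pos w ed)
  (hopt : seq_bottleneck_opt w ed Pst) :
  [/\ inP [set: A] [set: T] (setX [set: A] [set: T]) Pst,
      (forall k, (k.+1 < #|T|)%N -> (w (ed k.+1) <= w (ed k))%R),
      (forall P' : assignment A T,
          inP [set: A] [set: T] (setX [set: A] [set: T]) P' -> P' != Pst ->
          exists l, [/\ (l < #|T|)%N,
            (forall k, (k < l)%N -> w (ed k) = nth 0%R (sorted_weights w P') k)
            & (w (ed l) < nth 0%R (sorted_weights w P') l)%R])
    & (forall (ed' : nat -> A * T) (P2 : assignment A T),
          valid_choices w ed' -> margins_pos w ed' ->
          seq_bottleneck_opt w ed' P2 ->
          (forall k, (k < #|T|)%N -> w (ed' k) = w (ed k)) /\ P2 = Pst)].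
Proof.
have fol := opt_follows_choices hw hchoice hmu hopt hT.
split=> [||P' hP' neq|ed' P2 hchoice' hmu' hopt']; first exact: opt_full hopt hT.
- exact: edge_weights_nonincreasing hopt.
- exact (lex_lt_opt hw hchoice hmu hopt hT hP' neq).
have fol' := opt_follows_choices hw hchoice' hmu' hopt' hT.
suff eq_P2 : P2 = Pst.
  by split=> // k kn; rewrite -(fol' k kn).2 eq_P2 (fol k kn).2.
apply/eqP; apply: contraT => neq.
have lt_P2 := lex_lt_opt hw hchoice hmu hopt hT (opt_full hopt' hT) neq.
rewrite eq_sym in neq.
have lt_Pst := lex_lt_opt hw hchoice' hmu' hopt' hT (opt_full hopt hT) neq.
case: (lex_lt_asym lt_P2); apply: eq_lex_lt lt_Pst => k kn.
  by rewrite (fol' k kn).2.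
by rewrite (fol k kn).2.
Qed.
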